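(* Let $R$ be a suitable ring with a nice topology, and suppose that convergent limits of units are units, i.e. whenever a net of units of $R$ converges to an element $w\in R$, $w$ is a unit. Then $R$ is an $\aleph_0$-exchange ring.
   Context: A ring $R$ is suitable if whenever $x+y=1$ in $R$ there are orthogonal idempotents $e\in Rx$, $f\in Ry$ with $e+f=1$. A linear Hausdorff topology on $R$ is a ring topology with a basis $\mathfrak U$ of neighborhoods of $0$ consisting of left ideals, with $\bigcap_{U\in\mathfrak U}U=0$. A family $\{x_i\}_{i\in I}\subseteq R$ is summable to $r$ if for every $U\in\mathfrak U$ there is a finite $F'\subseteq I$ with $\sum_{i\in F}x_i-r\in U$ for all finite $F$ with $F'\subseteq F\subseteq I$ (write $\sum_{i\in I}x_i=r$; the family is then called summable). The topology is nice if it is linear, Hausdorff, and for every summable family $\{x_i\}_{i\in I}$ and every family $\{r_i\}_{i\in I}\subseteq R$ the family $\{r_ix_i\}_{i\in I}$ is summable. For a cardinal $\aleph$, $R$ is an $\aleph$-exchange ring if for every family $\{x_i\}_{i\in I}$ with $|I|\le\aleph$ summable to $1$ there exist pairwise orthogonal idempotents $e_i\in Rx_i$ forming a summable family with $\sum_{i\in I}e_i=1$. *)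

From mathcomp Require Import all_boot all_algebra.
From Stdlib Require Import List.
Set Implicit Arguments. Unset Strict Implicit. Unset Printing Implicit Defensive.
Import GRing.Theory.
Local Open Scope ring_scope.

Section Defs.
Variable R : pzRingType.

Definition is_unit (u : R) : Prop := exists v : R, u * v = 1 /\ v * u = 1.

Definition idempotent (e : R) : Prop := e * e = e.

Definition in_left_principal (e x : R) : Prop := exists r : R, e = r * x.

Definition suitable : Prop :=
  forall x y : R, x + y = 1 ->
    exists e f : R, idempotent e /\ idempotent f /\ e * f = 0 /\ f * e = 0 /\
      in_left_principal e x /\ in_left_principal f y /\ e + f = 1.

Definition left_ideal (U : R -> Prop) : Prop :=
  U 0 /\ (forall a b, U a -> U b -> U (a + b)) /\ (forall r a, U a -> U (r * a)).

(* A linear Hausdorff ring topology on R, given by its basis B of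
   neighbourhoods of 0 (the neighbourhoods of x are the sets containing x + U,
   U in B). *)
Record linear_hausdorff (B : (R -> Prop) -> Prop) : Prop := {
  lh_nonempty : exists U, B U;
  lh_directed : forall U V, B U -> B V ->
      exists W, B W /\ (forall x, W x -> U x /\ V x);
  lh_left_ideal : forall U, B U -> left_ideal U;
  (* continuity of right multiplication (ring topology axiom not implied
     by the other ones) *)
  lh_right_mul : forall U (a : R), B U -> exists V, B V /\ (forall x, V x -> U (x * a));
  lh_hausdorff : forall x : R, (forall U, B U -> U x) -> x = 0
}.

(* finite subsets of an index type I, as duplicate-free lists *)
Definition summable_to (B : (R -> Prop) -> Prop) (I : Type) (x : I -> R) (r : R)
  : Prop :=
  forall U, B U ->
    exists F' : list I, NoDup F' /\
      forall F : list I, NoDup F -> (forall i, In i F' -> In i F) ->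
        U ((\sum_(i <- F) x i) - r).

Definition summable (B : (R -> Prop) -> Prop) (I : Type) (x : I -> R) : Prop :=
  exists r, summable_to B x r.

Definition nice (B : (R -> Prop) -> Prop) : Prop :=
  linear_hausdorff B /\
  forall (I : Type) (x : I -> R) (r : I -> R),
    summable B x -> summable B (fun i => r i * x i).

Definition directed_set (D : Type) (le : D -> D -> Prop) : Prop :=
  (exists d : D, True) /\ (forall a, le a a) /\
  (forall a b c, le a b -> le b c -> le a c) /\
  (forall a b, exists c, le a c /\ le b c).

Definition net_converges (B : (R -> Prop) -> Prop) (D : Type)
  (le : D -> D -> Prop) (x : D -> R) (w : R) : Prop :=
  forall U, B U -> exists d0, forall d, le d0 d -> U (x d - w).

Definition limits_of_units_are_units (B : (R -> Prop) -> Prop) : Prop :=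
  forall (D : Type) (le : D -> D -> Prop) (x : D -> R) (w : R),
    directed_set le -> (forall d, is_unit (x d)) -> net_converges B le x w ->
    is_unit w.

Definition countable_index (I : Type) : Prop :=
  exists f : I -> nat, forall i j, f i = f j -> i = j.

Definition aleph0_exchange (B : (R -> Prop) -> Prop) : Prop :=
  forall (I : Type) (x : I -> R), countable_index I -> summable_to B x 1 ->
    exists e : I -> R,
      (forall i, idempotent (e i)) /\
      (forall i, in_left_principal (e i) (x i)) /\
      (forall i j, i <> j -> e i * e j = 0) /\
      summable_to B e 1.

End Defs.

From Stdlib Require Import List FinFun Classical ClassicalEpsilon.
From mathcomp Require Import all_boot all_algebra.
Set Implicit Arguments. Unset Strict Implicit. Unset Printing Implicit Defensive.
Import GRing.Theory.
Local Open Scope ring_scope.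

(* Index the family as y_0, y_1, ... (zero outside the image of the index set)
   and let t_n = 1 - (y_0 + ... + y_(n-1)).  Suitability, applied once per step,
   produces a decreasing chain of idempotents 1 = F_0 >= F_1 >= ... with
   F_n in R t_n F_n and F_n = k_n F_n + F_(n+1), k_n in R y_n.  The differences
   e_n = F_n - F_(n+1) are orthogonal idempotents and c_n = e_n k_n lies in R y_n,
   so by niceness the c_n sum to some u.  The elements
   c_0 + ... + c_(n-1) + F_n a_n t_n are products of units of the form
   1 + (square-zero) and converge to u, so u is a unit; as e_n u = c_n, the
   idempotents u^-1 c_n = u^-1 e_n u form the required decomposition of 1. *)

Lemma InP (T : eqType) (x : T) (s : seq T) : In x s <-> x \in s.
Proof.
elim: s => [|a s IH] //=; rewrite in_cons; split.
- by case=> [->|/IH ->]; rewrite ?eqxx ?orbT.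
- by case/orP => [/eqP ->|/IH]; auto.
Qed.

Lemma NoDupP (T : eqType) (s : seq T) : NoDup s <-> uniq s.
Proof.
elim: s => [|a s IH] /=; first by split => // _; constructor.
split => [H | /andP [Ha Hs]].
- by inversion H; subst; apply/andP; split; [apply/negP => /InP | apply/IH].
- by constructor; [move/InP; apply/negP | apply/IH].
Qed.

Lemma In_pmap (T U : Type) (f : T -> option U) (y : U) (s : seq T) :
  In y (pmap f s) <-> exists x, In x s /\ f x = Some y.
Proof.
elim: s => [|a s IH] /=; first by split => // [[x []]].
case E: (f a) => [b|] /=; rewrite IH; split.
- by case=> [<-|[x [Hx Hy]]]; eauto.
- by case=> x [[<-|Hx] Hy]; [left; congruence | eauto].
- by case=> x [Hx Hy]; eauto.
- by case=> x [[<-|Hx] Hy]; [congruence | eauto].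
Qed.

Lemma NoDup_pmap (T U : Type) (f : T -> option U) (s : seq T) :
  (forall a b z, f a = Some z -> f b = Some z -> a = b) ->
  NoDup s -> NoDup (pmap f s).
Proof.
move=> f_inj; elim: s => [|a s IH] /= Hs; first by constructor.
inversion Hs; subst; case E: (f a) => [z|] /=; last by auto.
constructor; last by auto.
by case/In_pmap => b [Hb /(f_inj _ _ _ E) Eab]; subst.
Qed.

Lemma dependent_choice_nat (T : Type) (P : nat -> T -> Prop)
    (Q : nat -> T -> T -> Prop) (t0 : T) :
  P 0%N t0 -> (forall n t, P n t -> exists t', P n.+1 t' /\ Q n t t') ->
  exists s : nat -> T, s 0%N = t0 /\ forall n, P n (s n) /\ Q n (s n) (s n.+1).
Proof.
move=> P0 step.
pose next n (t : {t | P n t}) : {t' | P n.+1 t' /\ Q n (sval t) t'} :=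
  constructive_indefinite_description _ (step n _ (svalP t)).
pose chain := nat_rect (fun n => {t | P n t}) (exist _ t0 P0)
  (fun n t => exist _ (sval (next n t)) (proj1 (svalP (next n t)))).
exists (fun n => sval (chain n)); split => // n.
by split; [exact: svalP | exact: proj2 (svalP (next n (chain n)))].
Qed.

Section Units.
Variable R : pzRingType.

Lemma is_unit_mul (a b : R) : is_unit a -> is_unit b -> is_unit (a * b).
Proof.
move=> [a' [Ha1 Ha2]] [b' [Hb1 Hb2]]; exists (b' * a'); split.
- by rewrite -mulrA (mulrA b) Hb1 mul1r Ha1.
- by rewrite -mulrA (mulrA a') Ha2 mul1r Hb2.
Qed.

Lemma is_unit_1Dsqr0 (N : R) : N * N = 0 -> is_unit (1 + N).
Proof.
move=> HN; exists (1 - N); split.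
- by rewrite mulrDl mul1r mulrBr mulr1 HN subr0 subrK.
- by rewrite mulrDr mulr1 mulrBl mul1r HN subr0 subrK.
Qed.

(* [1 + x_0 + ... + x_(n-1)] is the product of the units [1 + x_i]. *)
Lemma is_unit_1Dsum (x : nat -> R) n :
  (forall i j, (i <= j)%N -> x i * x j = 0) ->
  is_unit (1 + \sum_(0 <= i < n) x i).
Proof.
move=> x0; elim: n => [|n IH]; first by rewrite big_geq // addr0; exists 1; rewrite mulr1.
have cross : \sum_(0 <= i < n) x i * x n = 0.
  by rewrite big_nat big1 // => i /andP [_ lt_in]; apply: x0 (ltnW lt_in).
have -> : 1 + \sum_(0 <= i < n.+1) x i = (1 + \sum_(0 <= i < n) x i) * (1 + x n).
  rewrite big_nat_recr //= mulrDl mul1r mulrDr mulr1 mulr_suml cross.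
  by rewrite addr0 addrAC addrA.
exact: is_unit_mul IH (is_unit_1Dsqr0 (x0 n n (leqnn n))).
Qed.

End Units.

Section IdempotentChain.
Variable R : pzRingType.
Variables F K M : nat -> R.
Hypothesis F_idem : forall n, idempotent (F n).
Hypothesis F0 : F 0%N = 1.
Hypothesis FS_F : forall n, F n.+1 * F n = F n.+1.
Hypothesis F_FS : forall n, F n * F n.+1 = F n.+1.
Hypothesis KF : forall n, K n * F n = F n - F n.+1.
Hypothesis MF : forall n, M n * F n = F n.

Definition chain_diff n := F n - F n.+1.
Local Notation e := chain_diff.

Lemma F_decreasing i j : (i <= j)%N -> F j * F i = F j /\ F i * F j = F j.
Proof.
elim: j => [|j IH]; first by rewrite leqn0 => /eqP ->; rewrite F_idem.
rewrite leq_eqVlt => /orP [/eqP ->|]; first by rewrite F_idem.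
rewrite ltnS => /IH [Hl Hr].
by split; [rewrite -(FS_F j) -mulrA Hl | rewrite -(F_FS j) mulrA Hr].
Qed.

Lemma F_diff_le i j : (i <= j)%N -> F i * e j = e j.
Proof.
move=> le_ij; rewrite mulrBr (F_decreasing le_ij).2.
by rewrite (F_decreasing (leqW le_ij)).2.
Qed.

Lemma F_diff_gt i j : (j < i)%N -> F i * e j = 0.
Proof.
move=> lt_ji; rewrite mulrBr (F_decreasing lt_ji).1.
by rewrite (F_decreasing (ltnW lt_ji)).1 subrr.
Qed.

Lemma diff_F_lt i j : (i < j)%N -> e i * F j = 0.
Proof.
move=> lt_ij; rewrite mulrBl (F_decreasing (ltnW lt_ij)).2.
by rewrite (F_decreasing lt_ij).2 subrr.
Qed.

Lemma chain_diff_idem n : idempotent (e n).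
Proof. by rewrite /idempotent {1}/chain_diff mulrBl F_diff_le // F_diff_gt ?subr0. Qed.

Lemma chain_diff_orth i j : i != j -> e i * e j = 0.
Proof.
rewrite neq_ltn => /orP [lt_ij | lt_ji].
- by rewrite [e j]/chain_diff mulrBr (diff_F_lt lt_ij) (diff_F_lt (leqW lt_ij)) subrr.
- by rewrite [e i]/chain_diff mulrBl (F_diff_gt lt_ji) (F_diff_gt (leqW lt_ji)) subrr.
Qed.

Lemma K_F i j : (i <= j)%N -> K i * F j = e i * F j.
Proof.
move=> le_ij; have [_ Fij] := F_decreasing le_ij.
by rewrite -{1}Fij mulrA KF.
Qed.

Lemma K_diff i j : (i <= j)%N -> K i * e j = e i * e j.
Proof. by move=> le_ij; rewrite !mulrBr !K_F // leqW. Qed.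

Lemma sum_chain_diff n : \sum_(0 <= i < n) e i = 1 - F n.
Proof.
rewrite -F0 -opprB -telescope_sumr // -sumrN.
by apply: eq_bigr => i _; rewrite opprB.
Qed.

(* With [x_i = e_i (K_i - 1)] and [q = F_n (M_n - 1)], the element below is
   [(1 + \sum_i x_i) (1 + q)], and all products [x_i x_j] (i <= j), [x_i q], [q q]
   vanish. *)
Lemma is_unit_chain_partial n :
  is_unit (\sum_(0 <= i < n) e i * K i + F n * M n).
Proof.
pose x i := e i * (K i - 1); pose q := F n * (M n - 1).
have x_x i j : (i <= j)%N -> x i * x j = 0.
  move=> le_ij; rewrite /x mulrA -(mulrA (e i)) mulrBl mul1r K_diff //.
  have -> : e i * (e i * e j - e j) = 0 by rewrite mulrBr mulrA chain_diff_idem subrr.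
  by rewrite mul0r.
have x_q i : (i < n)%N -> x i * q = 0.
  move=> lt_in; rewrite /x /q mulrA -(mulrA (e i)) mulrBl mul1r.
  rewrite (K_F (ltnW lt_in)).
  by rewrite diff_F_lt // sub0r mulrN diff_F_lt // oppr0 mul0r.
have q_q : q * q = 0.
  by rewrite /q -mulrA (mulrA (M n - 1)) mulrBl MF mul1r subrr mul0r mulr0.
have xs_q : (\sum_(0 <= i < n) x i) * q = 0.
  by rewrite mulr_suml big_nat big1 // => i /andP [_ /x_q].
have -> : \sum_(0 <= i < n) e i * K i + F n * M n =
          (1 + \sum_(0 <= i < n) x i) * (1 + q).
  rewrite mulrDl mul1r mulrDr mulr1 xs_q addr0.
  have sum_x : \sum_(0 <= i < n) x i = \sum_(0 <= i < n) e i * K i - (1 - F n).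
    by rewrite -sum_chain_diff -sumrB; apply: eq_bigr => i _; rewrite /x mulrBr mulr1.
  rewrite sum_x /q mulrBr mulr1 opprB addrC !addrA -(addrA _ _ (F n)).
  by rewrite (addrC _ (F n)) addrA subrK addrAC (addrC 1) addrK.
exact: is_unit_mul (is_unit_1Dsum _ x_x) (is_unit_1Dsqr0 q_q).
Qed.

End IdempotentChain.

Section LinearTopology.
Variables (R : pzRingType) (B : (R -> Prop) -> Prop).
Hypothesis lh : linear_hausdorff B.

Lemma nbhd0 U : B U -> U 0.
Proof. by move=> /(lh_left_ideal lh) []. Qed.

Lemma nbhdD U a b : B U -> U a -> U b -> U (a + b).
Proof. by move=> /(lh_left_ideal lh) [_ [+ _]]; apply. Qed.

Lemma nbhdMl U r a : B U -> U a -> U (r * a).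
Proof. by move=> /(lh_left_ideal lh) [_ [_ +]]; apply. Qed.

Lemma nbhdN U a : B U -> U a -> U (- a).
Proof. by move=> BU Ua; rewrite -mulN1r; apply: nbhdMl. Qed.

Lemma nbhdB U a b : B U -> U a -> U b -> U (a - b).
Proof. by move=> BU Ua Ub; apply: nbhdD => //; apply: nbhdN. Qed.

Lemma summable_to_ext (I : Type) (z z' : I -> R) r :
  z =1 z' -> summable_to B z r -> summable_to B z' r.
Proof.
move=> zz' Hz U BU; have [F' [nF' HF']] := Hz U BU; exists F'; split => // F nF sF.
by rewrite -(eq_bigr _ (fun i _ => zz' i)); apply: HF'.
Qed.

Lemma summable_to_mull (I : Type) (z : I -> R) r a :
  summable_to B z r -> summable_to B (fun i => a * z i) (a * r).
Proof.
move=> Hz U BU; have [F' [nF' HF']] := Hz U BU; exists F'; split => // F nF sF.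
by rewrite -mulr_sumr -mulrBr; apply: nbhdMl => //; apply: HF'.
Qed.

Lemma summable_to_unique (I : eqType) (z : I -> R) a b :
  summable_to B z a -> summable_to B z b -> a = b.
Proof.
move=> za zb; apply/eqP; rewrite -subr_eq0; apply/eqP.
apply: (lh_hausdorff lh) => U BU.
have [F1 [_ H1]] := za U BU; have [F2 [_ H2]] := zb U BU.
have nF : NoDup (undup (F1 ++ F2)) by apply/NoDupP; apply: undup_uniq.
have sF1 i : In i F1 -> In i (undup (F1 ++ F2)).
  by move=> /InP Hi; apply/InP; rewrite mem_undup mem_cat Hi.
have sF2 i : In i F2 -> In i (undup (F1 ++ F2)).
  by move=> /InP Hi; apply/InP; rewrite mem_undup mem_cat Hi orbT.
by have := nbhdB BU (H2 _ nF sF2) (H1 _ nF sF1); rewrite opprB addrC addrA subrK.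
Qed.

Lemma summable_to_single (I : eqType) (z : I -> R) j :
  (forall i, i != j -> z i = 0) -> summable_to B z (z j).
Proof.
move=> z0 U BU; exists [:: j]; split; first by constructor; [case | constructor].
move=> F /NoDupP uF /(_ j (or_introl erefl)) /InP jF.
rewrite (bigD1_seq j jF uF) /= big1_seq => [|i /andP [/z0 //]].
by rewrite addr0 subrr; apply: nbhd0.
Qed.

Lemma summable_to_partial (z : nat -> R) r :
  summable_to B z r -> forall U, B U ->
  exists N, forall n, (N <= n)%N -> U (\sum_(0 <= i < n) z i - r).
Proof.
move=> Hz U BU; have [F' [_ HF']] := Hz U BU.
exists (\max_(i <- F') i.+1) => n le_Nn; apply: HF'.
  by apply/NoDupP; apply: iota_uniq.
move=> i /InP iF'; apply/InP; rewrite mem_iota add0n subn0 /=.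
exact: leq_trans (@leq_bigmax_seq _ F' xpredT (fun i => i.+1) i iF' isT) le_Nn.
Qed.

End LinearTopology.

Section SuitableChain.
Variable R : pzRingType.
Hypothesis suitR : suitable R.

(* Apply suitability to [x = a y f + (1 - f)] and [x' = a t f], which sum to 1;
   the new idempotent is [f g], where [g] is the idempotent in [R x']. *)
Lemma suitable_refine (f a y t : R) :
  idempotent f -> f = a * (y + t) * f ->
  exists r f' a', [/\ idempotent f', f' = a' * t * f', f' * f = f', f * f' = f'
                    & r * y * f + f' = f].
Proof.
move=> ff Hf.
have sum1 : a * y * f + (1 - f) + a * t * f = 1.
  by rewrite addrAC -mulrDl -mulrDr -Hf addrC subrK.
have [g' [g [g'g' [gg [_ [_ [[rho g'E] [[sig gE] g'g]]]]]]]] := suitR sum1.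
have gf : g * f = g by rewrite gE -!mulrA ff.
exists (f * rho * a), (f * g), (f * sig * a); split.
- by rewrite /idempotent -mulrA (mulrA g) gf gg.
- have -> : f * sig * a * t * (f * g) = f * (sig * (a * t * f)) * g by rewrite !mulrA.
  by rewrite -gE -mulrA gg.
- by rewrite -mulrA gf.
- by rewrite mulrA ff.
- have g'f : g' * f = rho * a * y * f.
    by rewrite g'E -mulrA mulrDl mulrBl mul1r ff subrr addr0 -mulrA ff !mulrA.
  have -> : f * rho * a * y * f = f * g' * f by rewrite -(mulrA f g') g'f !mulrA.
  by rewrite -gf mulrA -mulrDl -mulrDr g'g mulr1 ff.
Qed.

Definition rest (y : nat -> R) n := 1 - \sum_(0 <= i < n) y i.

Lemma rest0 y : rest y 0 = 1.
Proof. by rewrite /rest big_geq // subr0. Qed.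

Lemma restS y n : rest y n = y n + rest y n.+1.
Proof. by rewrite /rest big_nat_recr //= opprD addrA addrC addrA subrK addrC. Qed.

Lemma idempotent_chain (y : nat -> R) :
  exists F A r : nat -> R, F 0%N = 1 /\
    [/\ forall n, idempotent (F n), forall n, F n = A n * rest y n * F n,
        forall n, F n.+1 * F n = F n.+1, forall n, F n * F n.+1 = F n.+1
      & forall n, r n * y n * F n + F n.+1 = F n].
Proof.
pose P n (t : R * R * R) := idempotent t.1.1 /\ t.1.1 = t.1.2 * rest y n * t.1.1.
pose Q n (t t' : R * R * R) := [/\ t'.1.1 * t.1.1 = t'.1.1, t.1.1 * t'.1.1 = t'.1.1
                                  & t'.2 * y n * t.1.1 + t'.1.1 = t.1.1].
have P0 : P 0%N (1, 1, 0) by rewrite /P /= rest0 /idempotent !mul1r.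
have step n t : P n t -> exists t', P n.+1 t' /\ Q n t t'.
  case: t => [[f a] r0] [/= ff Hf].
  have Hf' : f = a * (y n + rest y n.+1) * f by rewrite -restS.
  have [r [f' [a' [? ? ? ? ?]]]] := suitable_refine ff Hf'.
  by exists (f', a', r).
have [s [s0 Hs]] := dependent_choice_nat P0 step.
exists (fun n => (s n).1.1), (fun n => (s n).1.2), (fun n => (s n.+1).2).
by rewrite s0; split=> //; split=> n; have [[? ?] [? ? ?]] := Hs n.
Qed.

End SuitableChain.

Definition exchange_decomposition (R : pzRingType) (B : (R -> Prop) -> Prop)
    (I : Type) (x e : I -> R) : Prop :=
  (forall i, idempotent (e i)) /\ (forall i, in_left_principal (e i) (x i)) /\
  (forall i j, i <> j -> e i * e j = 0) /\ summable_to B e 1.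

Lemma leq_directed : directed_set (fun m n : nat => (m <= n)%N).
Proof.
split; first by exists 0%N.
split; first exact: leqnn.
split; first by move=> a b c; apply: leq_trans.
by move=> a b; exists (maxn a b); rewrite leq_maxl leq_maxr.
Qed.

Section ChainLimit.
Variables (R : pzRingType) (B : (R -> Prop) -> Prop).
Hypothesis lh : linear_hausdorff B.
Variables y F A r : nat -> R.
Hypothesis y1 : summable_to B y 1.
Hypothesis F_idem : forall n, idempotent (F n).
Hypothesis F0 : F 0%N = 1.
Hypothesis FS_F : forall n, F n.+1 * F n = F n.+1.
Hypothesis F_FS : forall n, F n * F n.+1 = F n.+1.
Hypothesis F_rest : forall n, F n = A n * rest y n * F n.
Hypothesis rF : forall n, r n * y n * F n + F n.+1 = F n.

Local Notation e := (chain_diff F).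
Local Notation c n := (e n * (r n * y n)).

Lemma ryF n : r n * y n * F n = F n - F n.+1.
Proof. by rewrite -[in RHS](rF n) addrK. Qed.

Lemma chain_sum_is_unit u : limits_of_units_are_units B ->
  summable_to B (fun n => c n) u -> is_unit u.
Proof.
move=> lim_units cu.
apply: (lim_units _ _ (fun n => \sum_(0 <= i < n) c i + F n * (A n * rest y n))).
- exact: leq_directed.
- move=> n; apply: (@is_unit_chain_partial _ F (fun i => r i * y i)
                       (fun i => A i * rest y i) F_idem F0 FS_F F_FS ryF).
  by move=> i; rewrite -F_rest.
- move=> U BU.
  have [N1 H1] := summable_to_partial cu BU.
  have [N2 H2] := summable_to_partial y1 BU.
  exists (maxn N1 N2) => n; rewrite geq_max => /andP [le1 le2].
  rewrite addrAC mulrA; apply: (nbhdD lh BU (H1 _ le1)); apply: (nbhdMl lh _ BU).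
  by rewrite /rest -opprB; apply: (nbhdN lh BU); apply: H2.
Qed.

Lemma chain_diff_mul_sum u : summable_to B (fun n => c n) u ->
  forall j, e j * u = c j.
Proof.
move=> cu j; apply: (summable_to_unique lh (summable_to_mull lh (e j) cu)).
have -> : c j = e j * c j by rewrite [RHS]mulrA (chain_diff_idem F_idem FS_F F_FS).
apply: (summable_to_single lh) => i neq_ij.
by rewrite mulrA (chain_diff_orth F_idem FS_F F_FS) ?mul0r // eq_sym.
Qed.

(* As [e_n u = c_n], the family [u^-1 c_n = u^-1 e_n u] is conjugate to [e]. *)
Lemma chain_decomposition u : summable_to B (fun n => c n) u -> is_unit u ->
  exists g, exchange_decomposition B y g.
Proof.
move=> cu [w [uw wu]].
have ecu := chain_diff_mul_sum cu.
have conj_mul a b : w * (a * u) * (w * (b * u)) = w * (a * b * u).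
  by rewrite !mulrA -(mulrA _ u w) uw mulr1.
exists (fun n => w * c n); split; [|split; [|split]].
- move=> n; rewrite /idempotent -ecu conj_mul.
  by rewrite (chain_diff_idem F_idem FS_F F_FS).
- by move=> n; exists (w * e n * r n); rewrite !mulrA.
- move=> i j /eqP neq_ij; rewrite -!ecu conj_mul.
  by rewrite (chain_diff_orth F_idem FS_F F_FS neq_ij) mul0r mulr0.
- by rewrite -wu; apply: summable_to_mull.
Qed.

End ChainLimit.

Lemma nat_exchange (R : pzRingType) (B : (R -> Prop) -> Prop) (y : nat -> R) :
  suitable R -> nice B -> limits_of_units_are_units B -> summable_to B y 1 ->
  exists g, exchange_decomposition B y g.
Proof.
move=> suitR [lh niceB] lim_units y1.
have [F [A [r [F0 [F_idem F_rest FS_F F_FS rF]]]]] := idempotent_chain suitR y.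
have [u cu] : summable B (fun n => chain_diff F n * (r n * y n)).
  have [u cu] := niceB nat y (fun n => chain_diff F n * r n) (ex_intro _ 1 y1).
  by exists u; apply: summable_to_ext cu => n; rewrite mulrA.
apply: (chain_decomposition lh F_idem FS_F F_FS cu).
exact: (chain_sum_is_unit lh y1 F_idem F0 FS_F F_FS F_rest rF lim_units cu).
Qed.

Section Reindex.
Variables (R : pzRingType) (B : (R -> Prop) -> Prop) (I : Type) (idx : I -> nat).
Hypothesis idx_inj : injective idx.

Definition preimage n : option I :=
  epsilon (inhabits None) (fun o => forall i, o = Some i <-> idx i = n).

Lemma preimageP n i : preimage n = Some i <-> idx i = n.
Proof.
move: i; apply: (epsilon_spec (inhabits None)
                   (fun o => forall i, o = Some i <-> idx i = n)).
have [[i <-] | none] := classic (exists i, idx i = n).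
- by exists (Some i) => j; split => [[<-] // | /idx_inj ->].
- by exists None => j; split => // ji; case: none; exists j.
Qed.

Lemma preimage_idx i : preimage (idx i) = Some i.
Proof. exact/preimageP. Qed.

Lemma NoDup_pmap_preimage s : NoDup s -> NoDup (pmap preimage s).
Proof. by apply: NoDup_pmap => a b i /preimageP <- /preimageP. Qed.

Variable x : I -> R.

Definition xnat n := if preimage n is Some i then x i else 0.

Lemma sum_xnat s : \sum_(n <- s) xnat n = \sum_(i <- pmap preimage s) x i.
Proof.
elim: s => [|n s IH] /=; first by rewrite !big_nil.
by rewrite big_cons /xnat; case: (preimage n) => [i|]; rewrite ?big_cons IH ?add0r.
Qed.

Lemma summable_to_xnat r : summable_to B x r -> summable_to B xnat r.
Proof.
move=> xr U BU; have [F' [nF' HF']] := xr U BU.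
exists (map idx F'); split; first exact: Injective_map_NoDup.
move=> F nF sF; rewrite sum_xnat; apply: HF'; first exact: NoDup_pmap_preimage.
move=> i iF'; apply/In_pmap; exists (idx i); split; last exact: preimage_idx.
by apply: sF; apply/in_map_iff; exists i.
Qed.

Lemma summable_to_comp_idx (g : nat -> R) r :
  (forall n, preimage n = None -> g n = 0) ->
  summable_to B g r -> summable_to B (fun i => g (idx i)) r.
Proof.
move=> g0 gr U BU; have [F' [nF' HF']] := gr U BU.
exists (pmap preimage F'); split; first exact: NoDup_pmap_preimage nF'.
move=> F nF sF.
(* [g] vanishes on the indices of [F'] outside the image of [idx]. *)
set Z := filter (fun n => ~~ isSome (preimage n)) F'.
have sumZ : \sum_(n <- Z) g n = 0.
  by rewrite big_filter big1 // => n; case E: (preimage n) => // _; apply: g0.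
have := HF' (map idx F ++ Z).
rewrite big_cat big_map sumZ Monoid.mulm1; apply.
- apply: NoDup_app; [exact: Injective_map_NoDup | exact: NoDup_filter |].
  by move=> _ /in_map_iff [i [<- _]] /filter_In [_]; rewrite preimage_idx.
- move=> n inF'; apply/in_app_iff; case E: (preimage n) => [i|].
  + left; apply/in_map_iff; exists i; split; first exact/preimageP.
    by apply: sF; apply/In_pmap; exists n.
  + by right; apply/filter_In; rewrite E.
Qed.

Lemma exchange_decomposition_comp_idx (g : nat -> R) :
  exchange_decomposition B xnat g -> exchange_decomposition B x (fun i => g (idx i)).
Proof.
move=> [g_idem [g_in [g_orth g1]]]; split; [|split; [|split]].
- by move=> i; apply: g_idem.
- by move=> i; have := g_in (idx i); rewrite /xnat preimage_idx.
- by move=> i j neq_ij; apply: g_orth => /idx_inj.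
- apply: summable_to_comp_idx g1 => n none.
  by have [a ->] := g_in n; rewrite /xnat none mulr0.
Qed.

End Reindex.

Theorem theorem1 (R : pzRingType) (B : (R -> Prop) -> Prop) :
  suitable R -> nice B -> limits_of_units_are_units B -> aleph0_exchange B.
Proof.
move=> suitR niceB lim_units I x [idx idx_inj] x1.
have [g g_dec] := nat_exchange suitR niceB lim_units (summable_to_xnat idx_inj x1).
by exists (fun i => g (idx i)); apply: exchange_decomposition_comp_idx.
Qed.
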